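(* Let $A$ be a real $3\times3$ matrix whose eigenvalues are $\lambda_1$ (with algebraic multiplicity $2$) and $\lambda_2\neq\lambda_1$, and let $h>0$. If $\lambda_1=0$, set $\psi=1$, $\phi=h$, $\theta=\dfrac{e^{\lambda_2h}-\lambda_2h-1}{h^2\lambda_2^2}$. If $\lambda_1\neq0$, set $$\phi=\frac{(\lambda_2^2h-\lambda_1^2h+2\lambda_1)e^{\lambda_1h}-2\lambda_1e^{\lambda_2h}}{(\lambda_1-\lambda_2)^2},\qquad \psi=\frac{(2-\lambda_1h)e^{\lambda_1h}-\lambda_1\phi}{2},\qquad \theta=\frac{he^{\lambda_1h}-\phi}{2\lambda_1\phi^2}.$$ Then (whenever these expressions are defined) the explicit difference scheme $$\frac{\mathbf{x}_{k+1}-\psi\mathbf{x}_k}{\phi}=A\mathbf{x}_k+\theta\phi A^2\mathbf{x}_k$$ is exact for the system $\mathbf{x}'=A\mathbf{x}$.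
   Context: A one-step difference scheme with step size $h>0$ for $\mathbf{x}'=M\mathbf{x}$ is called exact if for every initial vector $\mathbf{x}_0$ the sequence $(\mathbf{x}_k)$ it generates satisfies $\mathbf{x}_k=\mathbf{x}(kh)$ for all $k\ge 0$, where $\mathbf{x}(t)$ solves $\mathbf{x}'=M\mathbf{x}$, $\mathbf{x}(0)=\mathbf{x}_0$. *)

From HB Require Import structures.
From mathcomp Require Import all_boot all_order all_algebra.
From mathcomp Require Import all_classical all_reals all_analysis.
Set Implicit Arguments. Unset Strict Implicit. Unset Printing Implicit Defensive.
Import Order.TTheory GRing.Theory Num.Theory.
Import numFieldNormedType.Exports.
Local Open Scope ring_scope.

Definition ode_solution (R : realType) (n : nat) (M : 'M[R]_n.+1)
  (x0 : 'cV[R]_n.+1) (x : R -> 'cV[R]_n.+1) : Prop :=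
  x 0 = x0 /\
  forall t : R, derivable x t 1 /\ 'D_1 x t = M *m x t.

Definition scheme_exact (R : realType) (n : nat) (M : 'M[R]_n.+1)
  (h psi phi theta : R) : Prop :=
  forall (x0 : 'cV[R]_n.+1) (xs : nat -> 'cV[R]_n.+1),
    xs 0%N = x0 ->
    (forall k : nat,
       phi^-1 *: (xs k.+1 - psi *: xs k)
       = M *m xs k + (theta * phi) *: ((M ^+ 2) *m xs k)) ->
    forall x : R -> 'cV[R]_n.+1, ode_solution M x0 x ->
    forall k : nat, xs k = x (k%:R * h).

Definition phi_par (R : realType) (l1 l2 h : R) : R :=
  if l1 == 0 then h else
  ((l2 ^+ 2 * h - l1 ^+ 2 * h + 2 * l1) * expR (l1 * h)
     - 2 * l1 * expR (l2 * h)) / (l1 - l2) ^+ 2.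

Definition psi_par (R : realType) (l1 l2 h : R) : R :=
  if l1 == 0 then 1 else
  ((2 - l1 * h) * expR (l1 * h) - l1 * phi_par l1 l2 h) / 2.

Definition theta_par (R : realType) (l1 l2 h : R) : R :=
  if l1 == 0 then (expR (l2 * h) - l2 * h - 1) / (h ^+ 2 * l2 ^+ 2) else
  (h * expR (l1 * h) - phi_par l1 l2 h) / (2 * l1 * phi_par l1 l2 h ^+ 2).

From HB Require Import structures.
From mathcomp Require Import all_boot all_order all_algebra.
From mathcomp Require Import all_classical all_reals all_analysis.
From mathcomp Require Import ring.
Import Order.TTheory GRing.Theory Num.Theory.
Local Open Scope ring_scope.

(* By Cayley-Hamilton, (A - l1)^2 (A - l2) = 0, and the Bezout identity
   (l1 - l2)^2 = (X - l1)^2 - (X - 2 l1 + l2) (X - l2) splits every vector into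
   a part killed by A - l2 and a part killed by (A - l1)^2.  Along a solution of
   x' = A x the first part evolves by e^(l2 t) and the second by
   e^(l1 t) (1 + t (A - l1)); a polynomial P acts on them as P(l2) and as
   P(l1) + P'(l1) (A - l1).  Hence x(s + h) = P(A) x(s) whenever P interpolates
   t |-> e^(t h) at l2 and, to first order, at l1.  The scheme reads
   x_(k+1) = P(A) x_k with P = psi + phi X + theta phi^2 X^2, and the choice of
   psi and theta makes P(l1) = e^(l1 h), P'(l1) = h e^(l1 h) for any phi, while
   the formula for phi is exactly P(l2) = e^(l2 h). *)

Section scalar_ode.
Context {R : realType}.

Lemma is_derive_expRM (a t : R) :
  is_derive t 1 (fun s : R => expR (a * s)) (a * expR (a * t)).
Proof.
have lin : is_derive t (1 : R) (fun s : R => a * s) a.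
  by have := is_deriveZ a (is_derive_id t (1 : R)); rewrite /GRing.scale /= mulr1.
by have := is_derive1_comp (is_derive_expR (a * t)) lin; rewrite mulrC.
Qed.

Lemma expR_ode_forced (f : R -> R) (l c s : R) :
  (forall u : R, is_derive u 1 f (l * f u + expR (l * (u - s)) * c)) ->
  forall t, f t = expR (l * (t - s)) * (f s + (t - s) * c).
Proof.
move=> f' t.
pose g (u : R) := expR (- l * u) * f u - u * (expR (- l * s) * c).
have g'0 (u : R) : is_derive u 1 g 0.
  have dlin := is_deriveM (is_derive_id u (1 : R)) (is_derive_cst (expR (- l * s) * c) u 1).
  apply: is_derive_eq (is_deriveB (is_deriveM (is_derive_expRM (- l) u) (f' u)) dlin) _.
  rewrite /GRing.scale /= mulr0 mulr1 add0r mulrDr [expR (- l * u) * (expR _ * c)]mulrA -expRD.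
  have -> : - l * u + l * (u - s) = - l * s by ring.
  ring.
have gts : g t = g s by apply: is_derive_0_is_cst.
rewrite /g in gts.
have {}gts : expR (- l * t) * f t = expR (- l * s) * (f s + (t - s) * c).
  by rewrite -[LHS](subrK (t * (expR (- l * s) * c))) gts; ring.
rewrite -[f t]mul1r -(expR0 R) -(subrr (l * t)) -mulNr expRD -mulrA gts mulrA -expRD.
by congr (expR _ * _); ring.
Qed.

End scalar_ode.

Section linear_ode.
Context {R : realType} {n : nat} {A : 'M[R]_n.+1} {x : R -> 'cV[R]_n.+1}.
Hypothesis x_ode : forall t : R, derivable x t 1 /\ 'D_1 x t = A *m x t.

Lemma is_derive_mulmx_sol {m} (B : 'M[R]_(m, n.+1)) (i : 'I_m) (t : R) :
  is_derive t 1 (fun s => (B *m x s) i 0) ((B *m (A *m x t)) i 0).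
Proof.
have coord j : is_derive t 1 (fun s => x s j 0) ((A *m x t) j 0).
  have [dx Dx] := x_ode t.
  apply: DeriveDef; first by move/derivable_mxP: dx; apply.
  by rewrite -Dx derive_mx // mxE.
have -> : (fun s => (B *m x s) i 0) = \sum_(j < n.+1) (fun s => B i j * x s j 0).
  by rewrite fct_sumE; apply/funext => s; rewrite mxE.
apply: is_derive_eq (is_derive_sum (fun j => is_deriveZ (B i j) (coord j))) _.
by rewrite [RHS]mxE.
Qed.

Lemma mulmx_sol_eigen {m} (B : 'M[R]_(m, n.+1)) (l s t : R) :
  B *m A = l *: B -> B *m x t = expR (l * (t - s)) *: (B *m x s).
Proof.
move=> BA; apply/matrixP => i j; rewrite ord1 [RHS]mxE.
apply: etrans (@expR_ode_forced _ (fun u => (B *m x u) i 0) l 0 s _ t) _;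
  last by rewrite mulr0 addr0.
move=> u.
apply: is_derive_eq (is_derive_mulmx_sol B i u) _.
by rewrite mulmxA BA -scalemxAl mxE mulr0 addr0.
Qed.

Lemma mulmx_sol_forced {m} (B C : 'M[R]_(m, n.+1)) (l s t : R) :
  B *m A = l *: B + C -> C *m A = l *: C ->
  B *m x t = expR (l * (t - s)) *: (B *m x s + (t - s) *: (C *m x s)).
Proof.
move=> BA CA; apply/matrixP => i j.
rewrite ord1 [RHS]mxE [(B *m x s + _) i 0]mxE [(_ *: (C *m x s)) i 0]mxE.
apply: etrans
  (@expR_ode_forced _ (fun u => (B *m x u) i 0) l ((C *m x s) i 0) s _ t) _ => // u.
apply: is_derive_eq (is_derive_mulmx_sol B i u) _.
by rewrite mulmxA BA mulmxDl -scalemxAl (mulmx_sol_eigen C l s u CA) !mxE.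
Qed.

End linear_ode.

Section horner_mx_eigen.
Context {R : comNzRingType} {n : nat} {A : 'M[R]_n.+1}.

Lemma horner_mx_XsubC l : horner_mx A ('X - l%:P) = A - l%:M.
Proof. by rewrite rmorphB /= horner_mx_X horner_mx_C. Qed.

Lemma horner_mx_mulXsubC p l :
  horner_mx A (p * ('X - l%:P)) = horner_mx A p *m A - l *: horner_mx A p.
Proof.
by rewrite rmorphM /= horner_mx_XsubC -mulmxE mulmxBr scalar_mxC mul_scalar_mx.
Qed.

Lemma horner_mx_eigenvector {m} p l (v : 'M[R]_(n.+1, m)) :
  (A - l%:M) *m v = 0 -> horner_mx A p *m v = p.[l] *: v.
Proof.
rewrite mulmxBl mul_scalar_mx => /eqP; rewrite subr_eq0 => /eqP Av.
elim/poly_ind: p => [|p c IHp]; first by rewrite rmorph0 mul0mx horner0 scale0r.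
rewrite rmorphD rmorphM /= horner_mx_X horner_mx_C mulmxDl -mulmxA Av.
by rewrite -scalemxAr IHp mul_scalar_mx scalerA hornerMXaddC scalerDl mulrC.
Qed.

Lemma horner_mx_gen_eigenvector {m} p l (v : 'M[R]_(n.+1, m)) :
  (A - l%:M) *m ((A - l%:M) *m v) = 0 ->
  horner_mx A p *m v = p.[l] *: v + p^`().[l] *: ((A - l%:M) *m v).
Proof.
set w := (A - l%:M) *m v => Nw.
have Av : A *m v = l *: v + w by rewrite /w mulmxBl mul_scalar_mx addrC subrK.
elim/poly_ind: p => [|p c IHp]; first by rewrite rmorph0 mul0mx deriv0 !horner0 !scale0r addr0.
rewrite rmorphD rmorphM /= horner_mx_X horner_mx_C mulmxDl -mulmxA Av mulmxDr.
rewrite -scalemxAr IHp (horner_mx_eigenvector p _ _ Nw) mul_scalar_mx.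
rewrite derivMXaddC hornerD hornerMXaddC hornerM hornerX.
rewrite !scalerDr !scalerDl !scalerA !(mulrC l) -!addrA; congr (_ + _).
by rewrite addrCA [RHS]addrCA; congr (_ + _); apply: addrC.
Qed.

Lemma horner_mx_mulmx p q : horner_mx A p *m horner_mx A q = horner_mx A (p * q).
Proof. by rewrite rmorphM. Qed.

Lemma horner_mx_mulmxC {m} p q (v : 'M[R]_(n.+1, m)) :
  horner_mx A p *m (horner_mx A q *m v) = horner_mx A q *m (horner_mx A p *m v).
Proof. by rewrite !mulmxA !horner_mx_mulmx mulrC. Qed.

End horner_mx_eigen.

Section hermite_shift.
Context {R : realType} {n : nat} {A : 'M[R]_n.+1} {l1 l2 : R}.
Hypothesis l12 : l1 != l2.
Hypothesis annihilated : horner_mx A (('X - l1%:P) ^+ 2 * ('X - l2%:P)) = 0.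
Context {x : R -> 'cV[R]_n.+1}.
Hypothesis x_ode : forall t : R, derivable x t 1 /\ 'D_1 x t = A *m x t.

Lemma ode_solution_shift_horner (P : {poly R}) (s h : R) :
  P.[l1] = expR (l1 * h) -> P^`().[l1] = h * expR (l1 * h) ->
  P.[l2] = expR (l2 * h) ->
  x (s + h) = horner_mx A P *m x s.
Proof.
move=> Pl1 P'l1 Pl2.
pose U := horner_mx A (('X - l1%:P) ^+ 2).
pose V := horner_mx A ('X - l2%:P).
pose W := horner_mx A (('X - l2%:P) * ('X - l1%:P)).
pose Q := horner_mx A ('X - (2 * l1 - l2)%:P).
have bezout (w : 'cV[R]_n.+1) : (l1 - l2) ^+ 2 *: w = U *m w - Q *m (V *m w).
  rewrite mulmxA horner_mx_mulmx -mulmxBl -rmorphB.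
  rewrite -mul_scalar_mx -(horner_mx_C A); congr (horner_mx A _ *m w); ring.
have UA : U *m A = l2 *: U.
  by apply/eqP; rewrite -subr_eq0 /U -horner_mx_mulXsubC annihilated.
have VA : V *m A = l1 *: V + W by rewrite /W horner_mx_mulXsubC addrC subrK.
have WA : W *m A = l1 *: W.
  apply/eqP; rewrite -subr_eq0 /W -horner_mx_mulXsubC.
  by rewrite -[X in _ == X]annihilated; apply/eqP; congr horner_mx; ring.
have Ux := mulmx_sol_eigen x_ode U l2 s (s + h) UA.
have Vx := mulmx_sol_forced x_ode V W l1 s (s + h) VA WA.
rewrite [s + h - s]addrAC subrr add0r in Ux Vx.
have PU : horner_mx A P *m (U *m x s) = P.[l2] *: (U *m x s).
  apply: horner_mx_eigenvector.
  by rewrite -horner_mx_XsubC mulmxA horner_mx_mulmx mulrC annihilated mul0mx.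
have NV : (A - l1%:M) *m (V *m x s) = W *m x s.
  by rewrite -horner_mx_XsubC mulmxA horner_mx_mulmx mulrC.
have PV : horner_mx A P *m (V *m x s) = P.[l1] *: (V *m x s) + P^`().[l1] *: (W *m x s).
  rewrite (horner_mx_gen_eigenvector P l1) NV //.
  rewrite -horner_mx_XsubC mulmxA horner_mx_mulmx.
  by rewrite -[RHS](mul0mx _ (x s)) -annihilated; congr (horner_mx A _ *m _); ring.
have d2_neq0 : (l1 - l2) ^+ 2 != 0 by rewrite expf_neq0 // subr_eq0.
apply: (scalerI d2_neq0); rewrite bezout [RHS]bezout Ux Vx.
rewrite (horner_mx_mulmxC _ P) (horner_mx_mulmxC _ P) PU PV Pl1 P'l1 Pl2.
by rewrite scalerDr scalerA [h * _]mulrC.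
Qed.

End hermite_shift.

Definition scheme_poly {R : comNzRingType} (psi phi theta : R) : {poly R} :=
  psi%:P + phi *: 'X + (theta * phi ^+ 2) *: 'X ^+ 2.

Lemma horner_scheme_poly {R : comNzRingType} (psi phi theta t : R) :
  (scheme_poly psi phi theta).[t] = psi + phi * t + theta * phi ^+ 2 * t ^+ 2.
Proof. by rewrite !hornerD hornerC !hornerZ hornerX hornerXn mulrA. Qed.

Lemma horner_deriv_scheme_poly {R : comNzRingType} (psi phi theta t : R) :
  (scheme_poly psi phi theta)^`().[t] = phi + theta * phi ^+ 2 * t *+ 2.
Proof.
rewrite !derivD derivC !derivZ derivX derivXn add0r alg_polyC.
by rewrite hornerD hornerC hornerZ hornerMn hornerX mulrnAr.
Qed.

Lemma horner_mx_scheme_poly {R : comNzRingType} {n} (M : 'M[R]_n.+1) (psi phi theta : R)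
    (v : 'cV[R]_n.+1) :
  horner_mx M (scheme_poly psi phi theta) *m v
  = psi *: v + phi *: (M *m v) + (theta * phi ^+ 2) *: (M ^+ 2 *m v).
Proof.
rewrite /scheme_poly -!mul_polyC !rmorphD /=.
rewrite [horner_mx M (_ * 'X)]rmorphM [horner_mx M (_ * _ ^+ 2)]rmorphM /= rmorphXn /=.
by rewrite !horner_mx_C horner_mx_X !mulmxDl -!mulmxA !mul_scalar_mx.
Qed.

Lemma scheme_next {R : fieldType} {n} {M : 'M[R]_n.+1} {psi phi theta : R}
    {v y : 'cV[R]_n.+1} :
  phi != 0 ->
  phi^-1 *: (y - psi *: v) = M *m v + (theta * phi) *: (M ^+ 2 *m v) ->
  y = horner_mx M (scheme_poly psi phi theta) *m v.
Proof.
move=> phi_neq0 /(congr1 (fun w => phi *: w)) /=.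
rewrite scalerA mulfV // scale1r => /eqP; rewrite subr_eq => /eqP ->.
rewrite horner_mx_scheme_poly scalerDr scalerA addrC addrA; congr (_ + _ *: _).
by rewrite mulrCA -expr2.
Qed.

Lemma scheme_exact_of_shift {R : realType} {n} {M : 'M[R]_n.+1} {h psi phi theta : R} :
  phi != 0 ->
  (forall x0 x, ode_solution M x0 x ->
     forall s, x (s + h) = horner_mx M (scheme_poly psi phi theta) *m x s) ->
  scheme_exact M h psi phi theta.
Proof.
move=> phi_neq0 shift x0 xs xs0 xs_next x x_sol k; have [x_0 _] := x_sol.
elim: k => [|k IHk]; first by rewrite xs0 mul0r x_0.
rewrite (scheme_next phi_neq0 (xs_next k)) IHk -(shift _ _ x_sol).
by rewrite -[k.+1]addn1 natrD mulrDl mul1r.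
Qed.

Lemma scheme_poly_par_hermite {R : realType} (l1 l2 h : R) :
  h != 0 -> l1 != l2 -> phi_par l1 l2 h != 0 ->
  let P := scheme_poly (psi_par l1 l2 h) (phi_par l1 l2 h) (theta_par l1 l2 h) in
  [/\ P.[l1] = expR (l1 * h), P^`().[l1] = h * expR (l1 * h) & P.[l2] = expR (l2 * h)].
Proof.
move=> h_neq0 l12 phi_neq0 P.
rewrite /P horner_deriv_scheme_poly !horner_scheme_poly.
move: phi_neq0; rewrite /psi_par /theta_par /phi_par.
have [l1_0 | l1_neq0] := eqVneq l1 0.
  rewrite l1_0 in l12 * => _; rewrite eq_sym in l12.
  rewrite mul0r expR0.
  by split; [ring | ring | field; rewrite h_neq0 l12].
rewrite mulf_eq0 negb_or => /andP[num_neq0 _].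
have d_neq0 : l1 - l2 != 0 by rewrite subr_eq0.
by split; field; rewrite d_neq0 num_neq0 l1_neq0.
Qed.

Theorem mainTheorem13 (R : realType) (A : 'M[R]_3) (l1 l2 h : R) :
  0 < h -> l1 != l2 ->
  char_poly A = ('X - l1%:P) ^+ 2 * ('X - l2%:P) ->
  phi_par l1 l2 h != 0 ->
  scheme_exact A h (psi_par l1 l2 h) (phi_par l1 l2 h) (theta_par l1 l2 h).
Proof.
move=> h_gt0 l12 charA phi_neq0.
have annihilated : horner_mx A (('X - l1%:P) ^+ 2 * ('X - l2%:P)) = 0.
  by rewrite -charA Cayley_Hamilton.
have [Pl1 P'l1 Pl2] := scheme_poly_par_hermite l1 l2 h (lt0r_neq0 h_gt0) l12 phi_neq0.
apply: scheme_exact_of_shift phi_neq0 _ => x0 x [_ x_ode] s.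
exact: (ode_solution_shift_horner l12 annihilated x_ode _ _ _ Pl1 P'l1 Pl2).
Qed.
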